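(* Let $V_0$ be a smooth function on an interval, $H_0=-\big(\frac{\mathrm d^2}{\mathrm dz^2}+V_0\big)$, and let $\psi_1,\dots,\psi_{N+1}$ be smooth functions with $H_0\psi_1=0$ and $H_0\psi_{j+1}=C_j\psi_j$ for $1\le j\le N$, where $C_j$ are nonzero constants. Set $\theta_0=1$, $\theta_j=Wr(\psi_1,\dots,\psi_j)$, and assume $\theta_j$ has no zeros for $1\le j\le N+1$. Then for each $1\le n\le N$, with $V_n=V_0+2(\log\theta_n)''$, both $\phi_n=\theta_{n+1}/\theta_n$ and $\phi_{n-1}^{-1}=\theta_{n-1}/\theta_n$ are annihilated by $\frac{\mathrm d^2}{\mathrm dz^2}+V_n$, and $$Wr(\phi_n,\phi_{n-1}^{-1})=C_n,\quad\text{equivalently}\quad \theta_{n-1}'\theta_{n+1}-\theta_{n-1}\theta_{n+1}'=C_n\,\theta_n^2 .$$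
   Context: $Wr(f_1,\dots,f_n)=\det\big(\frac{\mathrm d^{i-1}f_j}{\mathrm dz^{i-1}}\big)_{i,j=1}^n$ is the Wronskian and $'=\mathrm d/\mathrm dz$. *)

From HB Require Import structures.
From mathcomp Require Import all_boot all_order all_algebra.
From mathcomp Require Import all_classical all_reals all_analysis.
Set Implicit Arguments. Unset Strict Implicit. Unset Printing Implicit Defensive.
Import Order.TTheory GRing.Theory Num.Theory.
Import numFieldNormedType.Exports.
Local Open Scope ring_scope.

Definition smooth_on (R : realType) (I : set R) (f : R -> R) : Prop :=
  forall (k : nat) (x : R), I x -> derivable (derive1n k f) x 1.

Definition open_itv (R : realType) (a b : \bar R) : set R :=
  [set x | (a < x%:E)%E /\ (x%:E < b)%E].

Definition Wr (R : realType) (n : nat) (f : 'I_n -> R -> R) (z : R) : R :=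
  \det (\matrix_(i < n, j < n) derive1n i (f j) z).

Definition Wr2 (R : realType) (f g : R -> R) (z : R) : R :=
  Wr (fun k : 'I_2 => if val k == 0%N then f else g) z.

(* theta_j = Wr(psi_1, ..., psi_j); theta_0 = 1 (empty determinant). *)
Definition theta (R : realType) (psi : nat -> R -> R) (j : nat) (z : R) : R :=
  Wr (fun k : 'I_j => psi k.+1) z.

From HB Require Import structures.
From mathcomp Require Import all_boot all_order all_algebra.
From mathcomp Require Import all_classical all_reals all_analysis.
From mathcomp Require Import ring zify.
Import Order.TTheory GRing.Theory Num.Theory.
Import numFieldNormedType.Exports.
Local Open Scope ring_scope.

(* With p = psi_1 and w = p'/p, the Darboux map A f = f' - w f = p (f/p)'
   intertwines the two Schroedinger operators: (d^2 + V_0 + 2 w') (A f) = A ((d^2 + V_0) f), the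
   Riccati equation w' = -V_0 - w^2 doing the work.  Hence A psi_2, ..., A psi_{N+1} is a chain of
   the same kind for the potential V_0 + 2 w', with constants C_2, ..., C_N.  Pulling p out of
   every column of the Wronskian gives theta_{k+1}(psi) = p theta_k(A psi_2, ...), so the
   identities of rank n for psi are those of rank n - 1 for the transformed chain, and induction
   leaves the case n = 1: A psi_2 and 1/p solve the new equation and Wr(A psi_2, 1/p) = C_1.  The
   last identity is Wr(theta_{n+1}/theta_n, theta_{n-1}/theta_n) = C_n written out. *)

Set Implicit Arguments.
Unset Strict Implicit.
Unset Printing Implicit Defensive.

Definition schrodinger (R : realType) (V f : R -> R) (z : R) : R :=
  derive1n 2 f z + V z * f z.

Definition logder (R : realType) (p : R -> R) (z : R) : R := derive1 p z / p z.

Definition darboux (R : realType) (p f : R -> R) (z : R) : R :=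
  derive1 f z - logder p z * f z.

Definition darboux_potential (R : realType) (V p : R -> R) (z : R) : R :=
  V z + 2 * derive1n 2 (fun t => ln `|p t|) z.

Definition theta_ratio (R : realType) (psi : nat -> R -> R) (m n : nat) (z : R) : R :=
  theta psi m z / theta psi n z.

Lemma open_itv_near (R : realType) (a b : \bar R) z :
  open_itv a b z -> \forall t \near z, open_itv a b t.
Proof.
case=> az zb.
have ha : \forall t \near z, (a < t%:E)%E.
  case: a az => [r| |] az.
  - rewrite lte_fin in az; move: (lt_nbhsr az); apply: filterS => t rt.
    by rewrite lte_fin.
  - by exfalso; move: az; rewrite ltNge leey.
  - by near=> t; exact: ltNyr.
have hb : \forall t \near z, (t%:E < b)%E.
  case: b zb => [r| |] zb.
  - rewrite lte_fin in zb; move: (lt_nbhsl zb); apply: filterS => t rt.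
    by rewrite lte_fin.
  - by near=> t; exact: ltry.
  - by exfalso; move: zb; rewrite ltNge leNye.
by move: ha hb; apply: filterS2 => t h1 h2; split.
Unshelve. all: by end_near. Qed.

(* [ring] and [field] compare their atoms up to conversion, which may unfold [derive1] into a
   limit: abstracting the derivatives first keeps them fast. *)
Ltac generalize_derivatives :=
  repeat match goal with
  | |- context [derive1n ?k ?f ?x] => let d := fresh "d" in set d := derive1n k f x; clearbody d
  | |- context [derive1 ?f ?x] => let d := fresh "d" in set d := derive1 f x; clearbody d
  end.

Section PointwiseDerivatives.
Variable R : realType.
Implicit Types (f g h : R -> R) (t c : R).

Lemma derive1n2 f : derive1n 2 f = derive1 (derive1 f).
Proof. by rewrite derive1nS derive1n1. Qed.

Lemma derive1n_cst c k : derive1n k.+1 (fun _ : R => c) = cst 0.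
Proof.
elim: k => [|k IH]; first by apply/funext => s; rewrite derive1n1 derive1_cst.
by rewrite derive1nS IH; apply/funext => s; rewrite derive1_cst.
Qed.

Lemma derivableDf f g t : derivable f t 1 -> derivable g t 1 ->
  derivable (fun s => f s + g s) t 1.
Proof. exact: derivableD. Qed.

Lemma derivableNf f t : derivable f t 1 -> derivable (fun s => - f s) t 1.
Proof. exact: derivableN. Qed.

Lemma derivableMf f g t : derivable f t 1 -> derivable g t 1 ->
  derivable (fun s => f s * g s) t 1.
Proof. exact: derivableM. Qed.

Lemma derive1Df f g t : derivable f t 1 -> derivable g t 1 ->
  derive1 (fun s => f s + g s) t = derive1 f t + derive1 g t.
Proof. by move=> df dg; rewrite !derive1E (deriveD df dg). Qed.

Lemma derive1Nf f t : derivable f t 1 -> derive1 (fun s => - f s) t = - derive1 f t.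
Proof. by move=> df; rewrite !derive1E -deriveN. Qed.

Lemma derive1Mf f g t : derivable f t 1 -> derivable g t 1 ->
  derive1 (fun s => f s * g s) t = derive1 f t * g t + f t * derive1 g t.
Proof. by move=> df dg; rewrite !derive1E (deriveM df dg) addrC mulrC. Qed.

Lemma derive1_div g h t : derivable g t 1 -> derivable h t 1 -> h t != 0 ->
  derive1 (fun s => g s / h s) t = (derive1 g t * h t - g t * derive1 h t) / h t ^+ 2.
Proof.
move=> dg dh h0; rewrite (derive1Mf dg (derivableV h0 dh)).
have -> : derive1 (fun s => (h s)^-1) t = - h t ^- 2 * derive1 h t.
  by rewrite derive1E (deriveV h0 dh) derive1E.
by field.
Qed.

Lemma derivable_sumf n (h : 'I_n -> R -> R) t : (forall l, derivable (h l) t 1) ->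
  derivable (fun s => \sum_(l < n) h l s) t 1.
Proof. by move=> dh; rewrite -fct_sumE; exact: derivable_sum. Qed.

Lemma derive1_sumf n (h : 'I_n -> R -> R) t : (forall l, derivable (h l) t 1) ->
  derive1 (fun s => \sum_(l < n) h l s) t = \sum_(l < n) derive1 (h l) t.
Proof.
move=> dh; rewrite -fct_sumE derive1E derive_sum //.
by apply: eq_bigr => l _; rewrite derive1E.
Qed.

Lemma ln_normE (x : R) : x != 0 -> ln `|x| = 2^-1 * ln (x * x).
Proof.
move=> x0; have nx : 0 < `|x| by rewrite normr_gt0.
rewrite -expr2 -(real_normK (num_real x)) expr2 lnM ?posrE //.
by field.
Qed.

Lemma is_derive_ln_sqr f t : derivable f t 1 -> f t != 0 ->
  is_derive t 1 (fun s => ln (f s * f s)) (2 * (derive1 f t / f t)).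
Proof.
move=> df f0; have f2 : 0 < f t * f t by rewrite -expr2 lt_def sqr_ge0 sqrf_eq0 f0.
have dsq := derivableMf df df.
have dln : derivable (@ln R) (f t * f t) 1 by apply: ex_derive; exact: is_derive1_ln.
apply: DeriveDef; first by apply/derivable1_diffP;
  apply: (differentiable_comp (g := @ln R)); exact/derivable1_diffP.
rewrite -derive1E (derive1_comp dsq dln) derive1Mf // derive1E.
have [_ ->] := is_derive1_ln f2.
by field.
Qed.

End PointwiseDerivatives.

Section SmoothOn.
Variables (R : realType) (I : set R).
Hypothesis I_open : forall z, I z -> \forall t \near z, I t.
Implicit Types (f g h u v : R -> R).

Definition eq_on f g := forall t, I t -> f t = g t.

Lemma derive1n_eq_on f g k : eq_on f g -> eq_on (derive1n k f) (derive1n k g).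
Proof.
move=> fg; elim: k => [|k IH] t It; first exact: fg.
rewrite !derive1nS !derive1E; apply: near_eq_derive.
by move: (I_open It); apply: filterS => s Is; apply: IH.
Qed.

Lemma derive1_eq_on f g t : eq_on f g -> I t -> derive1 f t = derive1 g t.
Proof. by move=> fg It; have := derive1n_eq_on 1 fg It; rewrite !derive1n1. Qed.

Lemma derivable_eq_on f g t : eq_on f g -> I t -> derivable g t 1 -> derivable f t 1.
Proof.
move=> fg It; apply: near_eq_derivable.
by move: (I_open It); apply: filterS => s Is; rewrite fg.
Qed.

Lemma smooth_eq_on f g : eq_on f g -> smooth_on I g -> smooth_on I f.
Proof.
move=> fg sg k t It; apply: (derivable_eq_on _ It (sg k t It)).
exact: derive1n_eq_on.
Qed.

Lemma smooth_derivable f t : smooth_on I f -> I t -> derivable f t 1.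
Proof. by move=> sf It; have := sf 0%N t It; rewrite derive1n0. Qed.

Lemma smooth_derive1 f : smooth_on I f -> smooth_on I (derive1 f).
Proof. by move=> sf k t It; rewrite -derive1Sn; apply: sf. Qed.

Lemma smooth_cst c : smooth_on I (fun _ => c).
Proof. by move=> [|k] t It; rewrite ?derive1n_cst; exact: derivable_cst. Qed.

Lemma derive1nD u v k : smooth_on I u -> smooth_on I v ->
  eq_on (derive1n k (fun s => u s + v s)) (fun t => derive1n k u t + derive1n k v t).
Proof.
move=> su sv; elim: k => [|k IH] t It //.
by rewrite !derive1nS (derive1_eq_on IH It) derive1Df; [|exact: su|exact: sv].
Qed.

Lemma derive1nN u k : smooth_on I u ->
  eq_on (derive1n k (fun s => - u s)) (fun t => - derive1n k u t).
Proof.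
move=> su; elim: k => [|k IH] t It //.
by rewrite !derive1nS (derive1_eq_on IH It) derive1Nf //; exact: su.
Qed.

Lemma pascal_sum (a : nat -> nat -> R) i :
  \sum_(l < i.+1) 'C(i, l)%:R * (a (i - l).+1 l + a (i - l)%N l.+1) =
  \sum_(l < i.+2) 'C(i.+1, l)%:R * a (i.+1 - l)%N l.
Proof.
rewrite [RHS]big_ord_recl /= subn0 bin0 mul1r.
under [X in _ = _ + X]eq_bigr => l _ do rewrite -[bump 0 l]/l.+1 subSS binS natrD mulrDl.
rewrite big_split /= addrA.
under eq_bigr => l _ do rewrite mulrDr.
rewrite big_split /=; congr (_ + _).
rewrite big_ord_recl [in RHS]big_ord_recr /= bin0 subn0 mul1r bin_small // mul0r addr0.
by congr (_ + _); apply: eq_bigr => l _; rewrite -[bump 0 l]/l.+1 subnSK.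
Qed.

Lemma derive1nM u v i : smooth_on I u -> smooth_on I v ->
  eq_on (derive1n i (fun s => u s * v s))
    (fun t => \sum_(l < i.+1) 'C(i, l)%:R * (derive1n (i - l) u t * derive1n l v t)).
Proof.
move=> su sv; elim: i => [|i IH] t It; first by rewrite big_ord1 /= mul1r.
have duv l : derivable (fun s => derive1n (i - l) u s * derive1n l v s) t 1.
  by apply: derivableM; [exact: su|exact: sv].
rewrite derive1nS (derive1_eq_on IH It) derive1_sumf; last first.
  by move=> l; apply: derivableM; [exact: derivable_cst|exact: duv].
rewrite -(pascal_sum (fun p q => derive1n p u t * derive1n q v t)).
apply: eq_bigr => l _.
by rewrite derive1Ml // derive1Mf -?derive1nS //; [exact: su|exact: sv].
Qed.

Lemma smoothD u v : smooth_on I u -> smooth_on I v -> smooth_on I (fun s => u s + v s).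
Proof.
move=> su sv k t It; apply: (derivable_eq_on (derive1nD k su sv) It).
by apply: derivableD; [exact: su|exact: sv].
Qed.

Lemma smoothN u : smooth_on I u -> smooth_on I (fun s => - u s).
Proof.
move=> su k t It; apply: (derivable_eq_on (derive1nN k su) It).
by apply: derivableN; exact: su.
Qed.

Lemma smoothB u v : smooth_on I u -> smooth_on I v -> smooth_on I (fun s => u s - v s).
Proof. by move=> su sv; exact: (smoothD su (smoothN sv)). Qed.

Lemma smoothM u v : smooth_on I u -> smooth_on I v -> smooth_on I (fun s => u s * v s).
Proof.
move=> su sv k t It; apply: (derivable_eq_on (derive1nM k su sv) It).
apply: derivable_sumf => l; apply: derivableM; first exact: derivable_cst.
by apply: derivableM; [exact: su|exact: sv].
Qed.

(* Induction on the order, for all quotients at once: the derivative of a quotient is again one. *)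
Lemma smooth_div u v : smooth_on I u -> smooth_on I v -> (forall t, I t -> v t != 0) ->
  smooth_on I (fun s => u s / v s).
Proof.
move=> + + + k; elim: k u v => [|k IH] u v su sv v0 t It.
  apply: derivableM; first exact: smooth_derivable su It.
  by apply: derivableV; [exact: v0|exact: smooth_derivable sv It].
rewrite derive1Sn.
have e : eq_on (derive1 (fun s => u s / v s))
    (fun s => (derive1 u s * v s - u s * derive1 v s) / (v s ^+ 2)).
  move=> s Is; apply: derive1_div; last exact: v0.
  - exact: smooth_derivable su Is.
  - exact: smooth_derivable sv Is.
apply: (derivable_eq_on (derive1n_eq_on k e) It); apply: IH It.
- exact: smoothB (smoothM (smooth_derive1 su) sv) (smoothM su (smooth_derive1 sv)).
- exact: smoothM.
- by move=> s Is; rewrite sqrf_eq0 v0.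
Qed.

Lemma is_derive_ln_norm f t : smooth_on I f -> (forall s, I s -> f s != 0) -> I t ->
  is_derive t 1 (fun s => ln `|f s|) (derive1 f t / f t).
Proof.
move=> sf f0 It; apply: (near_eq_is_derive (f := fun s => 2^-1 * ln (f s * f s))).
  by move: (I_open It); apply: filterS => s Is; rewrite ln_normE // f0.
have dln := is_derive_ln_sqr (smooth_derivable sf It) (f0 t It).
apply: DeriveDef; first by apply: derivableM; [exact: derivable_cst|exact: ex_derive].
rewrite -derive1E derive1Ml; last exact: ex_derive.
by rewrite derive1E; have [_ ->] := dln; field; exact: f0.
Qed.

Lemma smooth_ln_norm f : smooth_on I f -> (forall s, I s -> f s != 0) ->
  smooth_on I (fun s => ln `|f s|).
Proof.
move=> sf f0 [|k] t It.
  by rewrite derive1n0; apply: ex_derive; exact: is_derive_ln_norm.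
have e : eq_on (derive1 (fun s => ln `|f s|)) (fun s => derive1 f s / f s).
  by move=> s Is; rewrite derive1E; have [_ ->] := is_derive_ln_norm sf f0 Is.
rewrite derive1Sn; apply: (derivable_eq_on (derive1n_eq_on k e) It).
exact: smooth_div (smooth_derive1 sf) sf f0 k t It.
Qed.

(** * Wronskians *)

Lemma Wr2E f g z : Wr2 f g z = f z * derive1 g z - g z * derive1 f z.
Proof.
rewrite /Wr2 /Wr (expand_det_row _ ord0) !big_ord_recl big_ord0 addr0.
rewrite /cofactor !det_mx11 !mxE /= expr0 expr1 mul1r mulN1r.
by rewrite mulrN.
Qed.

Lemma Wr2_div f g h z :
  derivable f z 1 -> derivable g z 1 -> derivable h z 1 -> h z != 0 ->
  Wr2 (fun s => f s / h s) (fun s => g s / h s) z = Wr2 f g z / h z ^+ 2.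
Proof.
by move=> df dg dh h0; rewrite !Wr2E !derive1_div //; field.
Qed.

Lemma theta0 (psi : nat -> R -> R) : theta psi 0 = fun _ => 1.
Proof. by apply/funext => z; rewrite /theta /Wr det_mx00. Qed.

Lemma theta1 (psi : nat -> R -> R) : theta psi 1 = psi 1%N.
Proof. by apply/funext => z; rewrite /theta /Wr det_mx11 mxE derive1n0. Qed.

Lemma Wr2_eq_on f f' g g' z : eq_on f f' -> eq_on g g' -> I z ->
  Wr2 f g z = Wr2 f' g' z.
Proof.
by move=> ff gg Iz; rewrite !Wr2E (ff z Iz) (gg z Iz) (derive1_eq_on ff Iz) (derive1_eq_on gg Iz).
Qed.

(* Leibniz's rule: the Wronskian matrix of (g F_j) is L times that of (F_j), with L lower
   triangular with diagonal g. *)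
Lemma Wr_mulf k g (F G : 'I_k -> R -> R) t : smooth_on I g ->
  (forall j, smooth_on I (F j)) -> (forall j, eq_on (G j) (fun s => g s * F j s)) -> I t ->
  Wr G t = g t ^+ k * Wr F t.
Proof.
move=> sg sF eG It; rewrite /Wr.
pose L := \matrix_(i < k, l < k) ('C(i, l)%:R * derive1n (i - l) g t).
have -> : \matrix_(i < k, j < k) derive1n i (G j) t =
          L *m \matrix_(i < k, j < k) derive1n i (F j) t.
  apply/matrixP => i j; rewrite !mxE (derive1n_eq_on i (eG j) It) (derive1nM i sg (sF j) It).
  rewrite (big_ord_widen k (fun l => 'C(i, l)%:R * (derive1n (i - l) g t * derive1n l (F j) t))
                         (ltn_ord i)).
  rewrite big_mkcond; apply: eq_bigr => l _; rewrite !mxE mulrA.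
  case: ifP => // /negbT; rewrite -leqNgt => hl.
  by rewrite bin_small // !mul0r.
rewrite det_mulmx det_trig; last first.
  by apply/is_trig_mxP => i j ij; rewrite mxE bin_small // mul0r.
congr (_ * _); rewrite (eq_bigr (fun _ => g t)); last first.
  by move=> i _; rewrite mxE binn subnn derive1n0 mul1r.
by rewrite prodr_const card_ord.
Qed.

Lemma Wr_one_cons k (F : 'I_k.+1 -> R -> R) t : eq_on (F ord0) (fun _ => 1) -> I t ->
  Wr F t = Wr (fun j : 'I_k => derive1 (F (lift ord0 j))) t.
Proof.
move=> F1 It; rewrite /Wr (expand_det_col _ ord0) big_ord_recl big1 ?addr0; last first.
  by move=> i _; rewrite mxE (derive1n_eq_on _ F1 It) lift0 derive1n_cst mul0r.
rewrite mxE -[derive1n _ _ t]/(F ord0 t) (F1 t It) mul1r /cofactor /= expr0 mul1r; congr (\det _).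
by apply/matrixP => i j; rewrite !mxE lift0 derive1Sn.
Qed.

(** * The Darboux transformation *)

Lemma smooth_logder p : smooth_on I p -> (forall s, I s -> p s != 0) ->
  smooth_on I (logder p).
Proof. by move=> sp p0; exact: smooth_div (smooth_derive1 sp) sp p0. Qed.

Lemma darboux_div p f : smooth_on I p -> smooth_on I f -> (forall s, I s -> p s != 0) ->
  eq_on (darboux p f) (fun s => p s * derive1 (fun t => f t / p t) s).
Proof.
move=> sp sf p0 s Is; have ps := p0 s Is.
rewrite /darboux /logder (derive1_div (smooth_derivable sf Is) (smooth_derivable sp Is) ps).
by field.
Qed.

Lemma smooth_darboux p f : smooth_on I p -> smooth_on I f -> (forall s, I s -> p s != 0) ->
  smooth_on I (darboux p f).
Proof.
by move=> sp sf p0; exact: smoothB (smooth_derive1 sf) (smoothM (smooth_logder sp p0) sf).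
Qed.

(* Factor psi_1 out of every column, then the first column becomes (1, 0, ..., 0). *)
Lemma theta_darboux (psi : nat -> R -> R) k t :
  (forall j, (1 <= j <= k.+1)%N -> smooth_on I (psi j)) ->
  (forall s, I s -> psi 1%N s != 0) -> I t ->
  theta psi k.+1 t = psi 1%N t * theta (fun j => darboux (psi 1%N) (psi j.+1)) k t.
Proof.
move=> spsi p0 It; set p := psi 1%N.
have sp : smooth_on I p by apply: spsi.
have spsiS (j : 'I_k.+1) : smooth_on I (psi j.+1)
  by apply: spsi; have := ltn_ord j; lia.
pose u (j : 'I_k.+1) s := psi j.+1 s / p s.
have su j : smooth_on I (u j) by exact: smooth_div (spsiS j) sp p0.
have pu (j : 'I_k.+1) : eq_on (psi j.+1) (fun s => p s * u j s).
  by move=> s Is; rewrite /u mulrC divfK // p0.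
have Du (j : 'I_k) : eq_on (darboux p (psi j.+2)) (fun s => p s * derive1 (u (lift ord0 j)) s).
  exact: darboux_div sp (spsiS (lift ord0 j)) p0.
rewrite /theta (Wr_mulf sp su pu It) (Wr_one_cons (F := u)) //; last first.
  by move=> s Is; rewrite /u divff // p0.
by rewrite (Wr_mulf sp (fun j => smooth_derive1 (su (lift ord0 j))) Du It) exprS mulrA.
Qed.

Lemma smooth_theta (psi : nat -> R -> R) k :
  (forall j, (1 <= j <= k)%N -> smooth_on I (psi j)) ->
  (forall j s, (1 <= j <= k)%N -> I s -> theta psi j s != 0) ->
  smooth_on I (theta psi k).
Proof.
elim: k psi => [|k IH] psi spsi th0; first by rewrite theta0; exact: smooth_cst.
have sp : smooth_on I (psi 1%N) by apply: spsi.
have p0 s : I s -> psi 1%N s != 0 by move=> Is; have := th0 1%N s isT Is; rewrite theta1.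
pose psi' j := darboux (psi 1%N) (psi j.+1).
have eth j : (j <= k)%N -> eq_on (theta psi j.+1) (fun t => psi 1%N t * theta psi' j t).
  move=> jk t It; apply: (theta_darboux _ p0 It) => i hi.
  by apply: spsi; lia.
apply: (smooth_eq_on (eth k (leqnn k))); apply: (smoothM sp); apply: IH => [j hj|j s hj Is].
  by apply: (smooth_darboux sp (spsi j.+1 _) p0); lia.
have jk : (j <= k)%N by lia.
have hj1 : (1 <= j.+1 <= k.+1)%N by lia.
by move: (th0 _ s hj1 Is); rewrite (eth j jk s Is) mulf_eq0 negb_or => /andP[].
Qed.

Lemma schrodinger_eq_on V V' f f' z : eq_on V V' -> eq_on f f' -> I z ->
  schrodinger V f z = schrodinger V' f' z.
Proof. by move=> VV ff Iz; rewrite /schrodinger (derive1n_eq_on 2 ff Iz) (VV z Iz) (ff z Iz). Qed.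

Section DarbouxStep.
Context {V0 p : R -> R}.
Hypothesis sV0 : smooth_on I V0.
Hypothesis sp : smooth_on I p.
Hypothesis p0 : forall s, I s -> p s != 0.
Hypothesis Hp : forall s, I s -> schrodinger V0 p s = 0.

Lemma darboux_potentialE :
  eq_on (darboux_potential V0 p) (fun s => V0 s + 2 * derive1 (logder p) s).
Proof.
move=> s Is; rewrite /darboux_potential derive1n2; congr (_ + 2 * _).
apply: derive1_eq_on Is => u Iu; rewrite derive1E.
by have [_ ->] := is_derive_ln_norm sp p0 Iu.
Qed.

Lemma smooth_darboux_potential : smooth_on I (darboux_potential V0 p).
Proof.
apply: smooth_eq_on darboux_potentialE _; apply: (smoothD sV0).
by apply: smoothM; [exact: smooth_cst|exact: smooth_derive1 (smooth_logder sp p0)].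
Qed.

Lemma riccati_logder : eq_on (derive1 (logder p)) (fun s => - V0 s - logder p s ^+ 2).
Proof.
move=> s Is; have ps := p0 Is.
have d0 := smooth_derivable sp Is; have d1 := smooth_derivable (smooth_derive1 sp) Is.
rewrite /logder (derive1_div d1 d0 ps).
have := Hp Is; rewrite /schrodinger derive1n2 => /eqP; rewrite addr_eq0 => /eqP ->.
by field.
Qed.

Lemma derive1_riccati : eq_on (derive1 (derive1 (logder p)))
  (fun s => - derive1 V0 s - 2 * logder p s * derive1 (logder p) s).
Proof.
move=> s Is; rewrite (derive1_eq_on riccati_logder Is).
have dV := smooth_derivable sV0 Is; have dw := smooth_derivable (smooth_logder sp p0) Is.
have -> : (fun s => - V0 s - logder p s ^+ 2) = (fun s => - V0 s + - (logder p s * logder p s)).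
  by apply/funext => u; rewrite expr2.
rewrite derive1Df; [|exact: derivableNf dV|exact: (derivableNf (derivableMf dw dw))].
rewrite !derive1Nf; [|exact: (derivableMf dw dw)|exact: dV].
by rewrite (derive1Mf dw dw); ring.
Qed.

Lemma derive1_darboux f : smooth_on I f -> eq_on (derive1 (darboux p f))
  (fun s => derive1 (derive1 f) s - (derive1 (logder p) s * f s + logder p s * derive1 f s)).
Proof.
move=> sf s Is.
have d1 := smooth_derivable (smooth_derive1 sf) Is; have d0 := smooth_derivable sf Is.
have dw := smooth_derivable (smooth_logder sp p0) Is.
rewrite /darboux derive1Df; [|exact: d1|exact: derivableNf (derivableMf dw d0)].
rewrite derive1Nf; last exact: derivableMf dw d0.
by rewrite (derive1Mf dw d0).
Qed.

Lemma schrodinger_darboux f t : smooth_on I f -> I t ->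
  schrodinger (darboux_potential V0 p) (darboux p f) t = darboux p (schrodinger V0 f) t.
Proof.
move=> sf It.
have d2 := smooth_derivable (smooth_derive1 (smooth_derive1 sf)) It.
have d1 := smooth_derivable (smooth_derive1 sf) It; have d0 := smooth_derivable sf It.
have dw := smooth_derivable (smooth_logder sp p0) It.
have dw1 := smooth_derivable (smooth_derive1 (smooth_logder sp p0)) It.
have dV := smooth_derivable sV0 It.
have Dsch : derive1 (schrodinger V0 f) t =
    derive1 (derive1 (derive1 f)) t + (derive1 V0 t * f t + V0 t * derive1 f t).
  rewrite /schrodinger derive1Df; [|exact: d2|exact: derivableMf dV d0].
  by rewrite (derive1Mf dV d0).
rewrite /schrodinger derive1n2 (derive1_eq_on (derive1_darboux sf) It).
have dA := derivableDf (derivableMf dw1 d0) (derivableMf dw d1).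
rewrite derive1Df; [|exact: d2|exact: derivableNf dA].
rewrite derive1Nf; last exact: dA.
rewrite derive1Df; [|exact: derivableMf dw1 d0|exact: derivableMf dw d1].
rewrite (derive1Mf dw1 d0) (derive1Mf dw d1) (derive1_riccati It) (darboux_potentialE It).
rewrite /darboux Dsch /schrodinger derive1n2.
by generalize_derivatives; ring.
Qed.

Lemma darboux_chain f g c t : smooth_on I f -> smooth_on I g ->
  (forall s, I s -> - schrodinger V0 f s = c * g s) -> I t ->
  - schrodinger (darboux_potential V0 p) (darboux p f) t = c * darboux p g t.
Proof.
move=> sf sg Hf It; rewrite (schrodinger_darboux sf It) /darboux.
have e : eq_on (schrodinger V0 f) (fun s => - (c * g s)).
  by move=> s Is; rewrite -Hf // opprK.
have dg := smooth_derivable sg It.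
rewrite (derive1_eq_on e It) (e t It) derive1Nf; last exact: derivableMf (derivable_cst c t 1) dg.
by rewrite (derive1Ml _ dg); ring.
Qed.

Lemma darboux_self : eq_on (darboux p p) (fun _ => 0).
Proof. by move=> s Is; have ps := p0 Is; rewrite /darboux /logder; field. Qed.

Lemma derive1_inv : eq_on (derive1 (fun s => 1 / p s)) (fun s => - (logder p s / p s)).
Proof.
move=> s Is; have ps := p0 Is.
rewrite (derive1_div (derivable_cst (1 : R) s 1) (smooth_derivable sp Is) ps).
by rewrite derive1_cst /cst /logder; field.
Qed.

Lemma schrodinger_inv t : I t -> schrodinger (darboux_potential V0 p) (fun s => 1 / p s) t = 0.
Proof.
move=> It; have pt := p0 It.
have dw := smooth_derivable (smooth_logder sp p0) It; have d0 := smooth_derivable sp It.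
rewrite /schrodinger derive1n2 (derive1_eq_on derive1_inv It) derive1Nf; last first.
  exact: smooth_derivable (smooth_div (smooth_logder sp p0) sp p0) It.
rewrite (derive1_div dw d0 pt) (darboux_potentialE It) (riccati_logder It).
by rewrite /logder; field.
Qed.

Lemma Wr2_darboux_inv f c t : smooth_on I f ->
  (forall s, I s -> - schrodinger V0 f s = c * p s) -> I t ->
  Wr2 (darboux p f) (fun s => 1 / p s) t = c.
Proof.
move=> sf Hf It; have pt := p0 It.
rewrite Wr2E (derive1_inv It) (derive1_darboux sf It) (riccati_logder It).
have := Hf t It; rewrite /schrodinger derive1n2 => H.
have -> : derive1 (derive1 f) t = - V0 t * f t - c * p t by rewrite -H; ring.
by rewrite /darboux /logder; field.
Qed.

End DarbouxStep.

Lemma theta_darboux_div (psi : nat -> R -> R) K k :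
  (forall j, (1 <= j <= K)%N -> smooth_on I (psi j)) ->
  (forall s, I s -> psi 1%N s != 0) -> (k < K)%N ->
  eq_on (theta (fun j => darboux (psi 1%N) (psi j.+1)) k) (fun t => theta psi k.+1 t / psi 1%N t).
Proof.
move=> spsi p0 kK t It; have pt := p0 t It.
rewrite (theta_darboux _ p0 It); first by rewrite mulrAC divff ?mul1r.
by move=> j hj; apply: spsi; lia.
Qed.

Lemma theta_ratio_darboux (psi : nat -> R -> R) K m n :
  (forall j, (1 <= j <= K)%N -> smooth_on I (psi j)) ->
  (forall s, I s -> psi 1%N s != 0) -> (forall s, I s -> theta psi n.+1 s != 0) ->
  (m < K)%N -> (n < K)%N ->
  eq_on (theta_ratio (fun j => darboux (psi 1%N) (psi j.+1)) m n) (theta_ratio psi m.+1 n.+1).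
Proof.
move=> spsi p0 th0 mK nK t It; have pt := p0 t It; have tht := th0 t It.
rewrite /theta_ratio (theta_darboux_div spsi p0 mK It) (theta_darboux_div spsi p0 nK It).
by field; rewrite tht pt.
Qed.

Lemma darboux_potential_div V0 p q q' : smooth_on I p -> smooth_on I q ->
  (forall s, I s -> p s != 0) -> (forall s, I s -> q s != 0) ->
  eq_on q' (fun t => q t / p t) ->
  eq_on (darboux_potential (darboux_potential V0 p) q') (darboux_potential V0 q).
Proof.
move=> sp sq p0 q0 qq t It; rewrite /darboux_potential.
have e : eq_on (fun s => ln `|q' s|) (fun s => ln `|q s| + - ln `|p s|).
  by move=> s Is; rewrite qq // normf_div ln_div // posrE normr_gt0 ?q0 ?p0.
have slq := smooth_ln_norm sq q0; have slp := smooth_ln_norm sp p0.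
rewrite (derive1n_eq_on 2 e It) (derive1nD 2 slq (smoothN slp) It) (derive1nN 2 slp It).
by generalize_derivatives; ring.
Qed.

Definition crum_identities (psi : nat -> R -> R) (V0 : R -> R) (c : R) (n : nat) (z : R) :=
  [/\ schrodinger (darboux_potential V0 (theta psi n)) (theta_ratio psi n.+1 n) z = 0,
      schrodinger (darboux_potential V0 (theta psi n)) (theta_ratio psi n.-1 n) z = 0 &
      Wr2 (theta_ratio psi n.+1 n) (theta_ratio psi n.-1 n) z = c].

Lemma crum_base V0 (psi : nat -> R -> R) c z : smooth_on I V0 ->
  smooth_on I (psi 1%N) -> smooth_on I (psi 2%N) -> (forall s, I s -> psi 1%N s != 0) ->
  (forall s, I s -> schrodinger V0 (psi 1%N) s = 0) ->
  (forall s, I s -> - schrodinger V0 (psi 2%N) s = c * psi 1%N s) -> I z ->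
  crum_identities psi V0 c 1 z.
Proof.
move=> sV0 sp sq p0 Hp Hq Iz.
have s12 j : (1 <= j <= 2)%N -> smooth_on I (psi j).
  by case: j => [|[|[|j]]] hj; [lia|exact: sp|exact: sq|lia].
have ephi : eq_on (theta_ratio psi 2 1) (darboux (psi 1%N) (psi 2%N)).
  move=> t It; rewrite /theta_ratio (theta_darboux s12 p0 It) !theta1.
  by rewrite mulrAC divff ?mul1r // p0.
rewrite /crum_identities /= theta1 [theta_ratio psi 0 1]/theta_ratio theta0 theta1.
split.
- rewrite (schrodinger_eq_on (fun _ _ => erefl) ephi Iz); apply/eqP; rewrite -oppr_eq0.
  by rewrite (darboux_chain sV0 sp p0 Hp sq sp Hq Iz) (darboux_self p0 Iz) mulr0.
- exact: schrodinger_inv.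
- rewrite (Wr2_eq_on ephi (fun _ _ => erefl) Iz).
  exact (Wr2_darboux_inv sp p0 Hp sq Hq Iz).
Qed.

Lemma crum_step V0 (psi : nat -> R -> R) c K n z :
  (forall j, (1 <= j <= K)%N -> smooth_on I (psi j)) ->
  (forall j s, (1 <= j <= K)%N -> I s -> theta psi j s != 0) -> (n.+2 <= K)%N ->
  (0 < n)%N -> I z ->
  crum_identities (fun j => darboux (psi 1%N) (psi j.+1)) (darboux_potential V0 (psi 1%N)) c n z ->
  crum_identities psi V0 c n.+1 z.
Proof.
move=> spsi th0 nK n0 Iz; set p := psi 1%N; set psi' := fun j => darboux p (psi j.+1).
have sp : smooth_on I p by apply: spsi; lia.
have h1 : (1 <= 1 <= K)%N by lia.
have p0 s : I s -> p s != 0 by move=> Is; have := th0 1%N s h1 Is; rewrite theta1.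
have thn s : I s -> theta psi n.+1 s != 0 by move=> Is; apply: th0 Is; lia.
have sth : smooth_on I (theta psi n.+1).
  by apply: smooth_theta => [j hj|j s hj Is]; [apply: spsi|apply: th0 Is]; lia.
have eV := darboux_potential_div V0 sp sth p0 thn (theta_darboux_div spsi p0 (ltnW nK)).
have ephi := theta_ratio_darboux (m := n.+1) spsi p0 thn nK (ltnW nK).
have einv : eq_on (theta_ratio psi' n.-1 n) (theta_ratio psi n n.+1).
  by have := theta_ratio_darboux (m := n.-1) spsi p0 thn; rewrite prednK //; apply; lia.
case=> Hphi Hinv HWr; split.
- by rewrite -(schrodinger_eq_on eV ephi Iz).
- by rewrite -(schrodinger_eq_on eV einv Iz).
- by rewrite -(Wr2_eq_on ephi einv Iz).
Qed.

Definition crum_chain (V0 : R -> R) (psi : nat -> R -> R) (C : nat -> R) (N : nat) :=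
  [/\ smooth_on I V0,
      forall j, (1 <= j <= N.+1)%N -> smooth_on I (psi j),
      forall s, I s -> schrodinger V0 (psi 1%N) s = 0,
      forall j s, (1 <= j <= N)%N -> I s -> - schrodinger V0 (psi j.+1) s = C j * psi j s &
      forall j s, (1 <= j <= N.+1)%N -> I s -> theta psi j s != 0].

Lemma crum_chain_darboux V0 (psi : nat -> R -> R) C N :
  crum_chain V0 psi C N.+1 ->
  crum_chain (darboux_potential V0 (psi 1%N)) (fun j => darboux (psi 1%N) (psi j.+1))
    (fun j => C j.+1) N.
Proof.
case=> sV0 spsi Hp Hj th0; set p := psi 1%N.
have sp : smooth_on I p by apply: spsi; lia.
have p0 s : I s -> p s != 0 by move=> Is; have := th0 1%N s isT Is; rewrite theta1.
have chain j s : (1 <= j <= N.+1)%N -> I s ->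
    - schrodinger (darboux_potential V0 p) (darboux p (psi j.+1)) s = C j * darboux p (psi j) s.
  move=> hj Is; apply: (darboux_chain sV0 sp p0 Hp (spsi j.+1 _) (spsi j _) _ Is); try lia.
  by move=> u Iu; exact: Hj j u hj Iu.
split.
- exact: smooth_darboux_potential sV0 sp p0.
- by move=> j hj; apply: (smooth_darboux sp (spsi j.+1 _) p0); lia.
- by move=> s Is; apply/eqP; rewrite -oppr_eq0 (chain 1%N s isT Is) (darboux_self p0 Is) mulr0.
- by move=> j s hj Is; apply: chain Is; lia.
- move=> j s hj Is; rewrite (theta_darboux_div spsi p0 _ Is); last lia.
  by rewrite mulf_neq0 ?invr_eq0 ?p0 //; apply: th0 Is; lia.
Qed.

Lemma crum V0 (psi : nat -> R -> R) C N n z :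
  crum_chain V0 psi C N -> (1 <= n <= N)%N -> I z -> crum_identities psi V0 (C n) n z.
Proof.
elim: n V0 psi C N => [|n IH] V0 psi C N ch nN Iz; first lia.
case: n IH nN => [|n] IH nN.
  have [sV0 spsi Hp Hj th0] := ch.
  have p0 s : I s -> psi 1%N s != 0 by move=> Is; have := th0 1%N s isT Is; rewrite theta1.
  apply: (crum_base sV0 (spsi 1%N _) (spsi 2%N _) p0 Hp _ Iz); try lia.
  by move=> s Is; apply: Hj Is; lia.
case: N ch nN => [|N] ch nN; first lia.
have [_ spsi _ _ th0] := ch.
apply: (crum_step (n := n.+1) spsi th0 _ isT Iz); first lia.
by apply: (IH _ _ _ N (crum_chain_darboux ch) _ Iz); lia.
Qed.
End SmoothOn.

Theorem mainTheorem14 (R : realType) (a b : \bar R) (N : nat)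
    (V0 : R -> R) (psi : nat -> R -> R) (C : nat -> R) :
  (a < b)%E ->
  smooth_on (open_itv a b) V0 ->
  (forall j, (1 <= j <= N.+1)%N -> smooth_on (open_itv a b) (psi j)) ->
  (forall j, (1 <= j <= N)%N -> C j != 0) ->
  (* H0 psi_1 = 0, with H0 = -(d^2/dz^2 + V0) *)
  (forall z, open_itv a b z ->
     - (derive1n 2 (psi 1%N) z + V0 z * psi 1%N z) = 0) ->
  (* H0 psi_{j+1} = C_j psi_j *)
  (forall j z, (1 <= j <= N)%N -> open_itv a b z ->
     - (derive1n 2 (psi j.+1) z + V0 z * psi j.+1 z) = C j * psi j z) ->
  (forall j z, (1 <= j <= N.+1)%N -> open_itv a b z -> theta psi j z != 0) ->
  forall n, (1 <= n <= N)%N ->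
  let Vn := fun z => V0 z + 2 * derive1n 2 (fun t => ln `|theta psi n t|) z in
  let phi := fun t => theta psi n.+1 t / theta psi n t in
  let phiinv := fun t => theta psi n.-1 t / theta psi n t in
  forall z, open_itv a b z ->
    [/\ derive1n 2 phi z + Vn z * phi z = 0,
        derive1n 2 phiinv z + Vn z * phiinv z = 0,
        Wr2 phi phiinv z = C n &
        derive1n 1 (theta psi n.-1) z * theta psi n.+1 z
          - theta psi n.-1 z * derive1n 1 (theta psi n.+1) z
        = C n * theta psi n z ^+ 2].
Proof.
move=> _ sV0 spsi _ H1 Hj th0 n nN Vn phi phiinv z Iz.
have I_open := @open_itv_near R a b.
have ch : crum_chain (open_itv a b) V0 psi C N.
  split; [exact: sV0|exact: spsi| |exact: Hj|exact: th0].
  by move=> s Is; apply/eqP; rewrite -oppr_eq0 H1.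
have [Hphi Hinv HWr] := crum I_open ch nN Iz.
split => //.
have dtheta k : (k <= N.+1)%N -> derivable (theta psi k) z 1.
  move=> kN; apply: (smooth_derivable (smooth_theta I_open _ _) Iz) => [j hj|j s hj Is].
    by apply: spsi; lia.
  by apply: th0 Is; lia.
have thn : theta psi n z != 0 by apply: th0 Iz; lia.
move: HWr; rewrite /theta_ratio Wr2_div //; try by apply: dtheta; lia.
by rewrite Wr2E !derive1n1 => <-; field.
Qed.
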